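(* Let $m=2$ and $i\in[n]$. If $g$ is a nonzero element of $\mathrm{LSym}$ and $g/\kappa_i\in\mathbb{C}[\mathbf{a},\mathbf{b}]$, then $g/\kappa_i\in\mathrm{LSym}$.
   Context: Variables $a_1,\dots,a_n,b_1,\dots,b_n$ (subscripts mod $n$), where $a_i=x_1^i$, $b_i=x_2^i$. $\mathrm{LSym}$ is the $\mathbb{C}$-subalgebra of $\mathbb{C}[\mathbf{a},\mathbf{b}]$ generated by $a_j+b_{j-1}$ and $a_jb_j$ for $j\in[n]$. $\kappa_i=\sum_{k=0}^{n-1}b_ib_{i+1}\cdots b_{i+k-1}a_{i+k+1}\cdots a_{i+n-1}$. *)

From mathcomp Require Import all_boot all_algebra.
From mathcomp Require Import complex.
From mathcomp Require Import Rstruct.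
From mathcomp Require Import mpoly.

Import GRing.Theory.
Local Open Scope ring_scope.

Definition C : fieldType := complex Rdefinitions.R.

(* We work with N := n.+1 >= 1 (the paper's n), indices 0..N-1 taken mod N.
   The polynomial ring C[a_0..a_{N-1}, b_0..b_{N-1}] is {mpoly C[N + N]}:
   variable lshift j is a_j, variable rshift j is b_j. *)
Notation PR n := {mpoly C[n.+1 + n.+1]}.

Definition av (n k : nat) : PR n := 'X_(lshift n.+1 (inZp k : 'I_n.+1)).
Definition bv (n k : nat) : PR n := 'X_(rshift n.+1 (inZp k : 'I_n.+1)).

(* Generators of LSym: a_j + b_{j-1} (j-1 = j + n mod N) and a_j b_j. *)
Definition lsym_gen (n : nat) (t : 'I_(n.+1 + n.+1)) : PR n :=
  match split t with
  | inl j => av n j + bv n (j + n)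
  | inr j => av n j * bv n j
  end.

(* LSym = the C-subalgebra generated by the generators, i.e. the set of
   polynomial expressions (with complex coefficients) in the generators. *)
Definition in_LSym (n : nat) (g : PR n) : Prop :=
  exists p : PR n, g = comp_mpoly [tuple lsym_gen n t | t < n.+1 + n.+1] p.

Definition kappa (n i : nat) : PR n :=
  \sum_(0 <= k < n.+1)
    ((\prod_(i <= l < i + k) bv n l) * (\prod_(i + k + 1 <= l < i + n.+1) av n l)).

(* Let [lsym_map] be the algebra endomorphism with [a_j |-> a_j + b_(j-1)] and
   [b_j |-> a_j b_j], so that LSym is its image.  With [x p = a_(i+p)] and
   [y p = b_(i+p)], kappa_i is the image of the continuant
   [K = cont x y 1 (N - 1)], which is linear in [x (N - 1)]:
   [K = x (N - 1) c - d] with [c], [d] coprime and free of [x (N - 1)].  Hence the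
   substitution [root_subst : x (N - 1) |-> d / c] into the fraction field has
   kernel exactly [(K)].  On the other hand [root_subst] factors through
   [lsym_map]: it suffices to split [X p := root_subst (x p)] and
   [Y p := root_subst (y p)] as [X (p + 1) = alpha (p + 1) + beta p] and
   [Y p = alpha p * beta p] cyclically, and [alpha p = H (p + 1) / H p],
   [beta p = Y p H p / H (p + 1)] does this for a solution [H] of the continuant
   recurrence that closes up because [root_subst K = 0]; the [H p] are nonzero
   since [K] does not divide their preimages, as an evaluation shows.  So if
   [lsym_map P = kappa_i h] then [root_subst P = 0], [P = K Q] and
   [h = lsym_map Q]. *)

From HB Require Import structures.
From mathcomp Require Import all_boot all_algebra.
From mathcomp Require Import complex.
From mathcomp Require Import Rstruct.
From mathcomp Require Import mpoly.
From mathcomp Require Import fraction.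
From mathcomp Require Import ring zify.
Import GRing.Theory Num.Theory.
Local Open Scope ring_scope.

Section MpolyDivisibility.
Variables (R : idomainType) (k : nat).
Implicit Types (c d p q u v w : {mpoly R[k]}) (t : 'I_k).

Lemma mpoly_ring_ind (P : {mpoly R[k]} -> Prop) :
  (forall a, P a%:MP) -> (forall t, P 'X_t) ->
  (forall p q, P p -> P q -> P (p + q)) -> (forall p q, P p -> P q -> P (p * q)) ->
  forall p, P p.
Proof.
move=> hC hX hD hM p0; elim/mpolyind: p0 => [|a m p _ _ Pp].
  by rewrite -mpolyC0.
apply: (hD) => //; rewrite -mul_mpolyC; apply: (hM) => //.
rewrite mpolyXE_id; apply: (big_ind P); [by rewrite -mpolyC1 | exact: hM | ].
move=> t _; elim: (m t) => [|e IHe]; first by rewrite expr0 -mpolyC1.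
by rewrite exprS; apply: (hM).
Qed.

Lemma mpoly_morph_eq (S : pzRingType) (f g : {mpoly R[k]} -> S) :
  {morph f : x y / x + y} -> {morph f : x y / x * y} ->
  {morph g : x y / x + y} -> {morph g : x y / x * y} ->
  (forall a, f a%:MP = g a%:MP) -> (forall t, f 'X_t = g 'X_t) -> f =1 g.
Proof.
move=> fD fM gD gM eqC eqX; apply: mpoly_ring_ind => // p q fgp fgq.
  by rewrite fD gD fgp fgq.
by rewrite fM gM fgp fgq.
Qed.

Lemma mpolyX_neq0 t : 'X_t != 0 :> {mpoly R[k]}.
Proof.
apply/negP => /eqP/(congr1 (mcoeff U_(t)%MM)).
by rewrite mcoeffX mcoeff0 eqxx => /eqP; rewrite oner_eq0.
Qed.

Definition substX0 t : {mpoly R[k]} -> {mpoly R[k]} :=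
  comp_mpoly [tuple (if s == t then 0 else 'X_s) | s < k].

HB.instance Definition _ t := GRing.RMorphism.on (substX0 t).

Lemma substX0X t s : substX0 t 'X_s = if s == t then 0 else 'X_s.
Proof. by rewrite /substX0 comp_mpolyXU -(tnth_nth 0) tnth_mktuple. Qed.

Lemma substX0C t a : substX0 t a%:MP = a%:MP.
Proof. exact: comp_mpolyC. Qed.

Lemma dvd_sub_substX0 t w : exists w', w - substX0 t w = 'X_t * w'.
Proof.
elim/mpoly_ring_ind: w.
- by move=> a; exists 0; rewrite substX0C subrr mulr0.
- move=> s; rewrite substX0X; case: eqP => [->|_].
    by exists 1; rewrite subr0 mulr1.
  by exists 0; rewrite subrr mulr0.
- move=> p q [p' hp] [q' hq]; exists (p' + q').
  by rewrite rmorphD opprD addrACA mulrDr -hp -hq.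
- move=> p q [p' hp] [q' hq]; exists (p' * q + substX0 t p * q').
  rewrite rmorphM mulrDr mulrA -hp mulrCA -hq.
  by rewrite mulrBl mulrBr addrA subrK.
Qed.

Definition mdvd c p := exists q, p = c * q.

Definition dvd_cancellable c d := forall q, mdvd c (d * q) -> mdvd c q.

Lemma dvd_cancellable1 c : dvd_cancellable c 1.
Proof. by move=> q; rewrite mul1r. Qed.

Lemma dvd_cancellableM c d1 d2 :
  dvd_cancellable c d1 -> dvd_cancellable c d2 -> dvd_cancellable c (d1 * d2).
Proof. by move=> c1 c2 q; rewrite -mulrA => /c1/c2. Qed.

Lemma dvd_cancellableX c t :
  c != 0 -> substX0 t c = c -> dvd_cancellable c 'X_t.
Proof.
move=> c0 ct q [w hw].
have w0 : substX0 t w = 0.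
  have := congr1 (substX0 t) hw; rewrite !rmorphM /= ct substX0X eqxx mul0r.
  by move/esym/eqP; rewrite mulf_eq0 (negbTE c0) => /eqP.
have [w' hw'] := dvd_sub_substX0 t w; rewrite w0 subr0 in hw'.
exists w'; apply: (mulfI (mpolyX_neq0 t)).
by rewrite hw hw' mulrCA.
Qed.

(* One step of the Euclidean algorithm: [gcd (x u - v, u) = gcd (u, v)]. *)
Lemma dvd_cancellable_euclid c u v x :
  u != 0 -> dvd_cancellable u v -> c = x * u - v -> dvd_cancellable c u.
Proof.
move=> u0 cuv -> q [t ht].
have [t' ht'] : mdvd u t.
  by apply: cuv; exists (x * t - q); rewrite mulrBr ht; ring.
exists t'; apply: (mulfI u0); rewrite ht ht'; ring.
Qed.

End MpolyDivisibility.
Arguments substX0 {R k}.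
Arguments mdvd {R k}.
Arguments dvd_cancellable {R k}.

Section Continuant.
Variable T : comPzRingType.
Implicit Types x y : nat -> T.

Fixpoint cont x y (a l : nat) {struct l} : T :=
  match l with
  | 0 => 1
  | l1.+1 => match l1 with
             | 0 => x a
             | l2.+1 => x (a + l1)%N * cont x y a l1 - y (a + l2)%N * cont x y a l2
             end
  end.

(* [cont x y a (-1) = 0], which makes [cont_recr] hold for [l = 0]. *)
Definition cont_pred x y a l := if l is l'.+1 then cont x y a l' else 0.

Lemma contSS x y a l :
  cont x y a l.+2 = x (a + l.+1)%N * cont x y a l.+1 - y (a + l)%N * cont x y a l.
Proof. by []. Qed.

Lemma cont_recr x y a l :
  cont x y a l.+1 = x (a + l)%N * cont x y a l - y (a + l).-1 * cont_pred x y a l.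
Proof. by case: l => [|l] /=; rewrite ?addn0 ?mulr1 ?mulr0 ?subr0 ?addnS. Qed.

Lemma cont_recl x y a l :
  cont x y a l.+2 = x a * cont x y a.+1 l.+1 - y a * cont x y a.+2 l.
Proof.
suff: (cont x y a l.+2 = x a * cont x y a.+1 l.+1 - y a * cont x y a.+2 l) /\
      (cont x y a l.+3 = x a * cont x y a.+1 l.+2 - y a * cont x y a.+2 l.+1) by case.
elim: l => [|l [IH1 IH2]].
  by split; rewrite /= ?addn0 ?addn1 ?addn2 ?addnS ?addSn ?addn0 ?addn1; ring.
split => //.
rewrite contSS IH1 IH2 [cont x y a.+1 l.+3]contSS [cont x y a.+2 l.+2]contSS.
have -> : (a + l.+3 = a.+1 + l.+2)%N by rewrite addSn addnS.
have -> : (a + l.+2 = a.+1 + l.+1)%N by rewrite addSn addnS.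
have -> : (a.+2 + l.+1 = a.+1 + l.+2)%N by rewrite !addSn !addnS.
have -> : (a.+2 + l = a.+1 + l.+1)%N by rewrite !addSn !addnS.
ring.
Qed.

Lemma eq_cont x y x' y' a l :
  (forall j, (j < a + l)%N -> x j = x' j) ->
  (forall j, (j.+1 < a + l)%N -> y j = y' j) ->
  cont x y a l = cont x' y' a l.
Proof.
move=> eqx eqy.
suff H l' : (l' <= l)%N -> (cont x y a l' = cont x' y' a l') /\
                           ((l'.+1 <= l)%N -> cont x y a l'.+1 = cont x' y' a l'.+1).
  by case: (H l (leqnn l)).
elim: l' => [|l' IH] hl'.
  by split => // h1; rewrite /= eqx //; lia.
have [IH1 IH2] := IH (ltnW hl'); split; first exact: IH2.
by move=> hl2; rewrite !contSS IH1 IH2 // eqx ?eqy //; lia.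
Qed.

Lemma cont_x1y0 a l : cont (fun _ => 1) (fun _ => 0) a l = 1.
Proof.
suff: cont (fun _ => 1) (fun _ => 0) a l = 1 /\ cont (fun _ => 1) (fun _ => 0) a l.+1 = 1.
  by case.
elim: l => [|l [IH1 IH2]] //; split => //.
by rewrite contSS IH1 IH2 mul0r subr0 mulr1.
Qed.

Lemma cont_x2y1 x y a l :
  (forall j, (j < a + l)%N -> x j = 2) -> (forall j, (j.+1 < a + l)%N -> y j = 1) ->
  cont x y a l = l.+1%:R.
Proof.
move=> x2 y1; rewrite (@eq_cont x y (fun _ => 2) (fun _ => 1)) //.
suff: cont (fun _ => 2) (fun _ => 1) a l = l.+1%:R /\
      cont (fun _ => 2) (fun _ => 1) a l.+1 = l.+2%:R by case.
elim: l {x2 y1} => [|l [IH1 IH2]] //; split => //.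
by rewrite contSS IH1 IH2; ring.
Qed.

(* Initial values chosen so that the solution closes up after [m + 2] steps
   once [cont x y 1 (m + 1)] vanishes ([csol_wrap]). *)
Definition csol0 x y m := y m.+1 * cont x y 1 m - y 0%N * cont x y 2 m.

Definition csol x y m q :=
  if q is q'.+1 then cont x y 0 q * csol0 x y m - y m.+1 * cont x y 1 q' * cont x y 0 m.+1
  else csol0 x y m.

Lemma csol_rec x y m q :
  csol x y m q.+2 = x q.+1 * csol x y m q.+1 - y q * csol x y m q.
Proof.
rewrite /csol; case: q => [|q].
  by rewrite contSS /= add0n; ring.
by rewrite contSS [cont x y 1 q.+2]contSS !add0n !add1n; ring.
Qed.

Lemma csol1 x y m :
  csol x y m 1 = x 0%N * csol x y m 0 - y m.+1 * cont x y 0 m.+1.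
Proof. by rewrite /csol mulr1. Qed.

Lemma csol_wrap x y m : cont x y 1 m.+1 = 0 ->
  csol x y m m.+2 = cont x y 0 m.+2 * csol x y m 0 /\
  csol x y m m.+1 = cont x y 0 m.+2 * cont x y 0 m.+1.
Proof.
move=> K0; split; first by rewrite /csol K0 mulr0 mul0r subr0.
by rewrite /csol cont_recl K0 /csol0; ring.
Qed.

Lemma eq_csol x y x' y' m q :
  (forall j, (j < m.+2)%N -> x j = x' j) -> (forall j, (j < m.+2)%N -> y j = y' j) ->
  (q <= m.+2)%N -> csol x y m q = csol x' y' m q.
Proof.
move=> eqx eqy hq.
have E a l : (a + l <= m.+2)%N -> cont x y a l = cont x' y' a l.
  by move=> hal; apply: eq_cont => j hj; [apply: eqx | apply: eqy]; lia.
rewrite /csol /csol0 !E ?eqy //; case: q hq => [|q] hq; rewrite ?E //; lia.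
Qed.

End Continuant.
Arguments cont {T}.
Arguments cont_pred {T}.
Arguments csol0 {T}.
Arguments csol {T}.
Arguments csol_wrap {T x y m}.

Section ContinuantMorphism.
Variables (T S : comPzRingType) (f : {rmorphism T -> S}).

Lemma rmorph_cont x y a l : f (cont x y a l) = cont (f \o x) (f \o y) a l.
Proof.
suff: f (cont x y a l) = cont (f \o x) (f \o y) a l /\
      f (cont x y a l.+1) = cont (f \o x) (f \o y) a l.+1 by case.
elim: l => [|l [IH1 IH2]]; first by rewrite /= rmorph1.
by split => //; rewrite !contSS rmorphB !rmorphM /= IH1 IH2.
Qed.

Lemma rmorph_csol x y m q : f (csol x y m q) = csol (f \o x) (f \o y) m q.
Proof.
by rewrite /csol /csol0; case: q => [|q]; rewrite !(rmorphB, rmorphM, rmorph_cont).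
Qed.

End ContinuantMorphism.
Arguments rmorph_cont {T S}.
Arguments rmorph_csol {T S}.

Section ContinuantSpecialPoint.
Variables (T : numDomainType) (m : nat).

(* A point where [cont 1 (m + 1)] vanishes while no [csol m q] does; away from
   the indices [m] and [m + 1] it is the point where [cont a l = l + 1]. *)
Definition xpt p : T := if p == m.+1 then m%:R else 2.
Definition ypt p : T := if p == m then m.+1%:R else if p == m.+1 then 0 else 1.

Lemma cont_pt a l : (a + l <= m.+1)%N -> cont xpt ypt a l = l.+1%:R.
Proof.
move=> hal; apply: cont_x2y1 => j hj; rewrite /xpt /ypt ?ifF //; apply/eqP; lia.
Qed.

Lemma cont_pred_pt a l : (a + l <= m.+2)%N -> cont_pred xpt ypt a l = l%:R.
Proof. by case: l => [|l] hal //=; rewrite cont_pt //; lia. Qed.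

Lemma cont_pt_root : cont xpt ypt 1 m.+1 = 0.
Proof.
rewrite cont_recr cont_pred_pt // cont_pt // add1n /xpt /ypt /= !eqxx; ring.
Qed.

Lemma csol_pt_neq0 q : (q <= m.+2)%N -> csol xpt ypt m q != 0.
Proof.
have y0 : ypt 0 = 1 by rewrite /ypt; case: eqP => [<-|_].
have y1 : ypt m.+1 = 0 by rewrite /ypt ifF ?eqxx //; apply/eqP; lia.
have c2 : cont xpt ypt 2 m = 1.
  have [->|m_gt0] := posnP m; first by [].
  have [k mk] : exists k, m = k.+1 by exists m.-1; lia.
  rewrite [in LHS]mk cont_recr cont_pred_pt ?cont_pt; try lia.
  by rewrite /xpt /ypt mk /= !eqxx; ring.
have csol0_pt : csol0 xpt ypt m = -1 by rewrite /csol0 c2 y0 y1; ring.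
case: q => [|q] hq; first by rewrite /= csol0_pt oppr_eq0 oner_eq0.
rewrite /csol csol0_pt y1 !mul0r subr0 mulrN1 oppr_eq0.
have [hlt|->] : (q < m.+1)%N \/ q = m.+1 by lia.
  by rewrite cont_pt ?pnatr_eq0 //; lia.
rewrite contSS !cont_pt //= /xpt /ypt !eqxx.
have -> : m%:R * m.+2%:R - m.+1%:R * m.+1%:R = -1 :> T by ring.
by rewrite oppr_eq0 oner_eq0.
Qed.

End ContinuantSpecialPoint.
Arguments xpt {T}.
Arguments ypt {T}.
Arguments csol_pt_neq0 {T m q}.

Section LSymMap.
Variable n : nat.
Local Notation N := n.+1.

Definition lsym_map : {mpoly C[N + N]} -> {mpoly C[N + N]} :=
  comp_mpoly [tuple lsym_gen n t | t < N + N].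

HB.instance Definition _ := GRing.RMorphism.on lsym_map.

Lemma lsym_mapX t : lsym_map 'X_t = lsym_gen n t.
Proof. by rewrite /lsym_map comp_mpolyXU -(tnth_nth 0) tnth_mktuple. Qed.

Lemma lsym_map_in_LSym p : in_LSym n (lsym_map p).
Proof. by exists p. Qed.

Lemma av_mod k l : k = l %[mod N] -> av n k = av n l.
Proof. by move=> kl; rewrite /av; congr 'X_(lshift _ _); apply: val_inj; rewrite /= kl. Qed.

Lemma bv_mod k l : k = l %[mod N] -> bv n k = bv n l.
Proof. by move=> kl; rewrite /bv; congr 'X_(rshift _ _); apply: val_inj; rewrite /= kl. Qed.

Lemma lsym_map_av k : lsym_map (av n k) = av n k + bv n (k + n).
Proof.
rewrite /av lsym_mapX /lsym_gen (unsplitK (inl _)) /=.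
by congr (_ + _); [apply: av_mod; rewrite modn_mod | apply: bv_mod; rewrite modnDml].
Qed.

Lemma lsym_map_bv k : lsym_map (bv n k) = av n k * bv n k.
Proof.
rewrite /bv lsym_mapX /lsym_gen (unsplitK (inr _)) /=.
by congr (_ * _); [apply: av_mod | apply: bv_mod]; rewrite modn_mod.
Qed.

Variable i : nat.

Definition kappa_trunc p := \sum_(0 <= k < p.+1)
  ((\prod_(i <= l < i + k) bv n l) * (\prod_(i + k + 1 <= l < i + p.+1) av n l)).

Lemma kappa_trunc0 : kappa_trunc 0 = 1.
Proof. by rewrite /kappa_trunc big_nat1 !big_geq ?mulr1 // addn0. Qed.

Lemma kappa_truncS p :
  kappa_trunc p.+1 = kappa_trunc p * av n (i + p.+1) + \prod_(i <= l < i + p.+1) bv n l.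
Proof.
rewrite /kappa_trunc big_nat_recr //= [\prod_(i + p.+1 + 1 <= l < _) _]big_geq; last by lia.
rewrite mulr1; congr (_ + _); rewrite mulr_suml; apply: eq_big_nat => k /andP [_ hk].
by rewrite (addnS i p.+1) big_nat_recr /= ?mulrA //; lia.
Qed.

Definition ashift p := av n (i + p).
Definition bshift p := bv n (i + p).

Lemma lsym_map_cont p : lsym_map (cont ashift bshift 1 p) = kappa_trunc p.
Proof.
suff: lsym_map (cont ashift bshift 1 p) = kappa_trunc p /\
      lsym_map (cont ashift bshift 1 p.+1) = kappa_trunc p.+1 by case.
elim: p => [|p [IH1 IH2]].
  split; first by rewrite rmorph1 kappa_trunc0.
  rewrite /= lsym_map_av kappa_truncS kappa_trunc0 mul1r addn1 big_nat1.
  by congr (_ + _); apply: bv_mod; rewrite addSn -addnS modnDr.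
split => //.
rewrite contSS rmorphB !rmorphM /= IH1 IH2 lsym_map_av lsym_map_bv.
rewrite [kappa_trunc p.+2]kappa_truncS kappa_truncS.
have -> : bv n (i + (1 + p.+1) + n) = bv n (i + p.+1).
  by apply: bv_mod; rewrite (_ : (i + (1 + p.+1) + n = (i + p.+1) + N)%N) ?modnDr //; lia.
rewrite (add1n p.+1) (add1n p) (addnS i p.+1) big_nat_recr /=; last by lia.
ring.
Qed.

End LSymMap.

Section ContinuantRoot.
Variables (m : nat) (i : 'I_m.+2).
Local Notation N := m.+2.
Local Notation x := (ashift m.+1 i).
Local Notation y := (bshift m.+1 i).

Definition ix p : 'I_(N + N) := lshift N (inZp (i + p)).
Definition iy p : 'I_(N + N) := rshift N (inZp (i + p)).

Lemma ashiftE p : x p = 'X_(ix p). Proof. by []. Qed.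
Lemma bshiftE p : y p = 'X_(iy p). Proof. by []. Qed.

Lemma inZp_shift_inj p q : (p < N)%N -> (q < N)%N ->
  (inZp (i + p) : 'I_N) = inZp (i + q) -> p = q.
Proof.
move=> hp hq /(congr1 val) /= /eqP; rewrite eqn_modDl !modn_small //.
by move/eqP.
Qed.

Lemma ix_inj p q : (p < N)%N -> (q < N)%N -> ix p = ix q -> p = q.
Proof. by move=> hp hq /lshift_inj; apply: inZp_shift_inj. Qed.

Lemma iy_inj p q : (p < N)%N -> (q < N)%N -> iy p = iy q -> p = q.
Proof. by move=> hp hq /rshift_inj; apply: inZp_shift_inj. Qed.

Lemma ix_neq_iy p q : ix p != iy q.
Proof. by rewrite /ix /iy eq_lrshift. Qed.

Lemma cont_shift_neq0 l : cont x y 1 l != 0.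
Proof.
pose v (t : 'I_(N + N)) : C := if split t is inl _ then 1 else 0.
apply/negP => /eqP /(congr1 (meval v)); rewrite rmorph_cont rmorph0.
rewrite (@eq_cont _ _ _ (fun _ => 1) (fun _ => 0)) ?cont_x1y0 => [/eqP|j _|j _] /=.
- by rewrite oner_eq0.
- by rewrite ashiftE mevalXU /v /ix (unsplitK (inl _)).
- by rewrite bshiftE mevalXU /v /iy (unsplitK (inr _)).
Qed.

Lemma substX0_cont t l : (forall j, (j < l.+1)%N -> ix j != t) ->
  (forall j, (j < l)%N -> iy j != t) ->
  substX0 t (cont x y 1 l) = cont x y 1 l.
Proof.
move=> tx ty; rewrite rmorph_cont; apply: eq_cont => j hj /=.
  by rewrite ashiftE substX0X (negbTE (tx j hj)).
by rewrite bshiftE substX0X (negbTE (ty j _)).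
Qed.

Lemma dvd_cancellable_bshift j l : (j < N)%N -> (l <= j)%N ->
  dvd_cancellable (cont x y 1 l) (y j).
Proof.
move=> jN lj; rewrite bshiftE; apply: dvd_cancellableX; first exact: cont_shift_neq0.
apply: substX0_cont => j' hj'; first by rewrite ix_neq_iy.
by apply/eqP => /iy_inj; lia.
Qed.

Lemma dvd_cancellable_cont l : (l <= m)%N -> dvd_cancellable (cont x y 1 l.+1) (cont x y 1 l).
Proof.
elim: l => [|l IHl] hl; first exact: dvd_cancellable1.
apply: (@dvd_cancellable_euclid _ _ _ _ (y l.+1 * cont x y 1 l) (x l.+2)).
- exact: cont_shift_neq0.
- by apply: dvd_cancellableM; [apply: dvd_cancellable_bshift | apply: IHl]; lia.
- by rewrite contSS add1n.
Qed.

Definition e := ix m.+1.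
Definition K := cont x y 1 m.+1.
Definition c := cont x y 1 m.
Definition d := y m * cont_pred x y 1 m.

Lemma K_eq : K = 'X_e * c - d.
Proof. by rewrite /K cont_recr. Qed.

Lemma substX0e_cont l : (l <= m)%N -> substX0 e (cont x y 1 l) = cont x y 1 l.
Proof.
move=> lm; apply: substX0_cont => j hj; last by rewrite eq_sym ix_neq_iy.
by apply/eqP => /ix_inj; lia.
Qed.

Lemma substX0e_c : substX0 e c = c.
Proof. exact: substX0e_cont. Qed.

Lemma substX0e_cont_pred l : (l <= m)%N ->
  substX0 e (cont_pred x y 1 l) = cont_pred x y 1 l.
Proof. by case: l => [|l] lm /=; [rewrite rmorph0 | rewrite substX0e_cont //; lia]. Qed.

Lemma substX0e_d : substX0 e d = d.
Proof.
by rewrite /d rmorphM /= bshiftE substX0X eq_sym (negbTE (ix_neq_iy _ _)) substX0e_cont_pred.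
Qed.

Lemma dvd_cancellable_cont_pred l : (l <= m)%N ->
  dvd_cancellable (cont x y 1 l) (y l * cont_pred x y 1 l).
Proof.
case: l => [|l] lm; first by move=> q _; exists q; rewrite mul1r.
by apply: dvd_cancellableM; [apply: dvd_cancellable_bshift | apply: dvd_cancellable_cont]; lia.
Qed.

Lemma mdvdK_cancel_c s q : mdvd K (c ^+ s * q) -> mdvd K q.
Proof.
elim: s q => [|s IHs] q; first by rewrite expr0 mul1r.
rewrite exprSr -mulrA => /IHs [Q hQ].
have [Q' hQ'] : mdvd c Q.
  apply: dvd_cancellable_cont_pred => //; exists ('X_e * Q - q).
  by rewrite mulrBr hQ K_eq /c /d; ring.
have c_neq0 : c != 0 := cont_shift_neq0 m.
exists Q'; apply: (mulfI c_neq0); rewrite hQ hQ'; ring.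
Qed.

Lemma pseudo_divK q :
  exists s Q r, c ^+ s * q = K * Q + r /\ substX0 e r = r.
Proof.
have substX0e_cX s : substX0 e (c ^+ s) = c ^+ s by rewrite rmorphXn /= substX0e_c.
elim/mpoly_ring_ind: q.
- by move=> a; exists 0%N, 0, a%:MP; rewrite expr0 mul1r mulr0 add0r substX0C.
- move=> t; case: (eqVneq t e) => [->|nte].
    by exists 1%N, 1, d; rewrite expr1 mulr1 K_eq substX0e_d; split => //; ring.
  by exists 0%N, 0, 'X_t; rewrite expr0 mul1r mulr0 add0r substX0X (negbTE nte).
- move=> p q [s1 [Q1 [r1 [h1 f1]]]] [s2 [Q2 [r2 [h2 f2]]]].
  exists (s1 + s2)%N, (c ^+ s2 * Q1 + c ^+ s1 * Q2), (c ^+ s2 * r1 + c ^+ s1 * r2).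
  split; last by rewrite rmorphD !rmorphM /= !substX0e_cX f1 f2.
  have -> : c ^+ (s1 + s2) * (p + q) = c ^+ s2 * (c ^+ s1 * p) + c ^+ s1 * (c ^+ s2 * q).
    by rewrite exprD; ring.
  by rewrite h1 h2; ring.
- move=> p q [s1 [Q1 [r1 [h1 f1]]]] [s2 [Q2 [r2 [h2 f2]]]].
  exists (s1 + s2)%N, (Q1 * (K * Q2 + r2) + r1 * Q2), (r1 * r2).
  split; last by rewrite rmorphM /= f1 f2.
  have -> : c ^+ (s1 + s2) * (p * q) = (c ^+ s1 * p) * (c ^+ s2 * q).
    by rewrite exprD; ring.
  by rewrite h1 h2; ring.
Qed.

End ContinuantRoot.

Local Notation "p %:F" := (@tofrac _ p).

Section RootSubstitution.
Variables (m : nat) (i : 'I_m.+2).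
Local Notation N := m.+2.
Local Notation R := {mpoly C[N + N]}.
Local Notation e := (e m i).
Local Notation K := (K m i).
Local Notation c := (c m i).
Local Notation d := (d m i).

Definition root_subst_var (t : 'I_(N + N)) : {fraction R} :=
  if t == e then d%:F / c%:F else ('X_t)%:F.

Definition root_subst : R -> {fraction R} :=
  mmap ((@tofrac _) \o (@mpolyC _ C)) root_subst_var.

HB.instance Definition _ := GRing.RMorphism.on root_subst.

Lemma root_substX t : root_subst 'X_t = root_subst_var t.
Proof. by rewrite /root_subst mmapX mmap1U. Qed.

Lemma root_substC a : root_subst a%:MP = (a%:MP)%:F.
Proof. exact: mmapC. Qed.

Lemma root_subst_substX0 p : root_subst (substX0 e p) = (substX0 e p)%:F.
Proof.
suff: root_subst \o substX0 e =1 @tofrac _ \o substX0 e by apply.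
apply: mpoly_morph_eq => /=.
- by move=> x y; rewrite !rmorphD.
- by move=> x y; rewrite !rmorphM.
- by move=> x y; rewrite !rmorphD.
- by move=> x y; rewrite !rmorphM.
- by move=> a; rewrite substX0C root_substC.
- move=> t; rewrite substX0X; case: ifP => te; first by rewrite !rmorph0.
  by rewrite root_substX /root_subst_var te.
Qed.

Lemma root_subst_free {p} : substX0 e p = p -> root_subst p = p%:F.
Proof. by move=> pe; rewrite -pe root_subst_substX0. Qed.

Lemma root_subst_K : root_subst K = 0.
Proof.
have cF_neq0 : c%:F != 0 by rewrite tofrac_eq0 cont_shift_neq0.
rewrite K_eq rmorphB rmorphM /= root_substX /root_subst_var eqxx.
by rewrite (root_subst_free (substX0e_c m i)) (root_subst_free (substX0e_d m i)) mulfVK ?subrr.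
Qed.

Lemma root_subst_eq0 q : root_subst q = 0 -> mdvd K q.
Proof.
move=> q0; have [s [Q [r [crq re]]]] := pseudo_divK m i q.
apply: (@mdvdK_cancel_c m i s); exists Q.
suff r0 : r = 0 by rewrite crq r0 addr0.
have := congr1 root_subst crq.
rewrite rmorphM rmorphD rmorphM /= q0 root_subst_K mulr0 mul0r add0r root_subst_free //.
by move/esym/eqP; rewrite tofrac_eq0 => /eqP.
Qed.

End RootSubstitution.

Section FactorSubstitution.
Variables (m : nat) (i : 'I_m.+2).
Local Notation N := m.+2.
Local Notation R := {mpoly C[N + N]}.
Local Notation x := (ashift m.+1 i).
Local Notation y := (bshift m.+1 i).
Local Notation root_subst := (root_subst m i).

Definition offset (j : 'I_N) : nat := ((j + (N - i)) %% N)%N.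

Lemma offset_inZp k : offset (inZp k) = ((k + (N - i)) %% N)%N.
Proof. by rewrite /offset /= modnDml. Qed.

Lemma offset_shift p : (p < N)%N -> offset (inZp (i + p)) = p.
Proof.
move=> pN; rewrite offset_inZp (_ : (i + p + (N - i) = p + N)%N); last first.
  by have := ltn_ord i; lia.
by rewrite modnDr modn_small.
Qed.

Lemma shift_offset (j : 'I_N) : inZp (i + offset j) = j.
Proof.
apply: val_inj; rewrite /= /offset modnDmr (_ : (i + (j + (N - i)) = j + N)%N).
  by rewrite modnDr modn_small.
by have := ltn_ord i; lia.
Qed.

Lemma offset_lt (j : 'I_N) : (offset j < N)%N.
Proof. by rewrite /offset ltn_mod. Qed.

Definition pt (t : 'I_(N + N)) : C :=
  match split t with inl j => xpt m (offset j) | inr j => ypt m (offset j) end.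

Lemma meval_pt_x p : (p < N)%N -> meval pt (x p) = xpt m p.
Proof. by move=> pN; rewrite ashiftE mevalXU /pt /ix (unsplitK (inl _)) offset_shift. Qed.

Lemma meval_pt_y p : (p < N)%N -> meval pt (y p) = ypt m p.
Proof. by move=> pN; rewrite bshiftE mevalXU /pt /iy (unsplitK (inr _)) offset_shift. Qed.

Lemma meval_pt_K : meval pt (K m i) = 0.
Proof.
rewrite rmorph_cont -(cont_pt_root _ m); apply: eq_cont => j hj /=.
  by rewrite meval_pt_x //; lia.
by rewrite meval_pt_y //; lia.
Qed.

Lemma meval_pt_csol q : (q <= N)%N -> meval pt (csol x y m q) = csol (xpt m) (ypt m) m q.
Proof. by move=> qN; rewrite rmorph_csol; apply: eq_csol => // j jN /=; rewrite ?meval_pt_x ?meval_pt_y. Qed.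

Definition xroot p := root_subst (x p).
Definition yroot p := root_subst (y p).
Definition hroot q := csol xroot yroot m q.

Lemma hroot_rec q : hroot q.+2 = xroot q.+1 * hroot q.+1 - yroot q * hroot q.
Proof. exact: csol_rec. Qed.

Lemma hroot_neq0 q : (q <= N)%N -> hroot q != 0.
Proof.
move=> qN; rewrite /hroot -(rmorph_csol root_subst).
apply/negP => /eqP /root_subst_eq0 [Q hQ].
have := congr1 (meval pt) hQ; rewrite rmorphM /= meval_pt_K mul0r meval_pt_csol //.
by move/eqP; rewrite (negbTE (csol_pt_neq0 qN)).
Qed.

Lemma cont_root : cont xroot yroot 1 m.+1 = 0.
Proof. by rewrite -(rmorph_cont root_subst); apply: root_subst_K. Qed.

Definition alpha p := hroot p.+1 / hroot p.
Definition beta p := yroot p * hroot p / hroot p.+1.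

Lemma alpha_add_beta p : (p < m.+1)%N -> alpha p.+1 + beta p = xroot p.+1.
Proof.
move=> pm; rewrite /alpha /beta hroot_rec.
have H0 : hroot p.+1 != 0 by apply: hroot_neq0; lia.
by rewrite -mulrDl subrK (mulfK H0).
Qed.

Lemma alpha_mul_beta p : (p < N)%N -> alpha p * beta p = yroot p.
Proof.
move=> pN; rewrite /alpha /beta.
have H0 : hroot p != 0 by apply: hroot_neq0; lia.
have H1 : hroot p.+1 != 0 by apply: hroot_neq0; lia.
by rewrite mulrC mulrA (mulfVK H1) (mulfK H0).
Qed.

Lemma alpha_add_beta_wrap : alpha 0 + beta m.+1 = xroot 0.
Proof.
have [H2 H1] := csol_wrap cont_root.
have H0 : hroot 0 != 0 by apply: hroot_neq0.
have k0 : cont xroot yroot 0 m.+2 != 0.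
  by apply: contraNneq (@hroot_neq0 N (leqnn N)) => k0; rewrite /hroot H2 k0 mul0r.
rewrite /alpha /beta /hroot H2 H1 csol1 [yroot _ * _]mulrCA invfM mulrACA (divff k0) mul1r.
by rewrite -mulrDl subrK (mulfK H0).
Qed.

Definition factor_subst_var (t : 'I_(N + N)) : {fraction R} :=
  match split t with inl j => alpha (offset j) | inr j => beta (offset j) end.

Definition factor_subst : R -> {fraction R} :=
  mmap ((@tofrac _) \o (@mpolyC _ C)) factor_subst_var.

HB.instance Definition _ := GRing.RMorphism.on factor_subst.

Lemma factor_subst_av k : factor_subst (av m.+1 k) = alpha (offset (inZp k)).
Proof. by rewrite /factor_subst mmapX mmap1U /factor_subst_var (unsplitK (inl _)). Qed.

Lemma factor_subst_bv k : factor_subst (bv m.+1 k) = beta (offset (inZp k)).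
Proof. by rewrite /factor_subst mmapX mmap1U /factor_subst_var (unsplitK (inr _)). Qed.

Lemma factor_subst_lsym_x p : (p < N)%N -> factor_subst (lsym_map m.+1 (x p)) = xroot p.
Proof.
move=> pN; rewrite lsym_map_av rmorphD /= factor_subst_av factor_subst_bv offset_shift //.
rewrite offset_inZp (_ : (i + p + m.+1 + (N - i) = (p + m.+1) + N)%N); last first.
  by have := ltn_ord i; lia.
rewrite modnDr; case: p pN => [|p] pN; first by rewrite add0n modn_small // alpha_add_beta_wrap.
rewrite (_ : (p.+1 + m.+1 = p + N)%N) ?modnDr ?modn_small ?alpha_add_beta //; lia.
Qed.

Lemma factor_subst_lsym_y p : (p < N)%N -> factor_subst (lsym_map m.+1 (y p)) = yroot p.
Proof.
by move=> pN; rewrite lsym_map_bv rmorphM /= factor_subst_av factor_subst_bv offset_shift ?alpha_mul_beta.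
Qed.

Lemma factor_subst_lsym_map q : factor_subst (lsym_map m.+1 q) = root_subst q.
Proof.
apply: (@mpoly_morph_eq _ _ _ (factor_subst \o lsym_map m.+1) root_subst) => /=.
- by move=> p q'; rewrite !rmorphD.
- by move=> p q'; rewrite !rmorphM.
- exact: rmorphD.
- exact: rmorphM.
- by move=> a; rewrite /lsym_map comp_mpolyC /factor_subst mmapC root_substC.
move=> t; rewrite -(splitK t); case: (split t) => j /=.
  by have := @factor_subst_lsym_x _ (offset_lt j); rewrite /xroot /ashift /av shift_offset.
by have := @factor_subst_lsym_y _ (offset_lt j); rewrite /yroot /bshift /bv shift_offset.
Qed.

End FactorSubstitution.

Theorem lemmaB4 (n : nat) (i : 'I_n.+1) (g h : {mpoly C[n.+1 + n.+1]}) :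
  in_LSym n g -> g != 0 -> g = kappa n i * h -> in_LSym n h.
Proof.
case: n i g h => [|m] i g h.
  by rewrite [kappa _ _](kappa_trunc0 0 i) mul1r => gL _ <-.
move=> [P gP] g0 gh; rewrite -/(lsym_map m.+1 P) in gP.
have kappaK : kappa m.+1 i = lsym_map m.+1 (K m i) by rewrite lsym_map_cont.
have [Q PKQ] : mdvd (K m i) P.
  apply: root_subst_eq0; rewrite -factor_subst_lsym_map -gP gh kappaK.
  by rewrite rmorphM /= factor_subst_lsym_map root_subst_K mul0r.
have kappa_neq0 : kappa m.+1 i != 0 by apply: contra_neq g0 => k0; rewrite gh k0 mul0r.
suff -> : h = lsym_map m.+1 Q by apply: lsym_map_in_LSym.
by apply: (mulfI kappa_neq0); rewrite -gh gP PKQ rmorphM /= -kappaK.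
Qed.
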